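(* Let $x$ be a stable g-matching with $x\ne x^{\max}$, let $f\in F$, and let $(a(1),c(1)),\dots,(a(k),c(k))$ be pairwise disjoint legal $f$-pairs under $x$ (all $2k$ edges distinct). Then for every $I\subseteq\{1,\dots,k\}$, $$C_f\Big(x_f+\sum_{i=1}^k\mathbf 1^{a(i)}-\sum_{i\in I}\mathbf 1^{c(i)}\Big)=x_f+\sum_{i=1}^k\mathbf 1^{a(i)}-\sum_{i=1}^k\mathbf 1^{c(i)}.$$
   Context: Let $G=(V,E)$ be a finite bipartite graph with color classes $W$ and $F$; the edge joining $w\in W$ and $f\in F$ is written $wf$. Let $b\in\mathbb Z_+^E$ be capacities. For $v\in V$, $E_v$ is the set of edges at $v$, $\mathcal B_v=\{z\in\mathbb Z_+^{E_v}: z\le b|_{E_v}\}$, $\mathbf 1^e$ the unit vector of $e$, $|z|=\sum_e|z(e)|$, $\wedge,\vee$ componentwise min/max. Each $v$ has a choice function $C_v:\mathcal B_v\to\mathcal B_v$ with $C_v(z)\le z$ and, for all $z,z'$: (A1) $z\ge z'\ge C_v(z)\Rightarrow C_v(z')=C_v(z)$; (A2) $z\ge z'\Rightarrow C_v(z)\wedge z'\le C_v(z')$; (A3) $z\ge z'\Rightarrow|C_v(z)|\ge|C_v(z')|$. $z$ is acceptable if $C_v(z)=z$; for distinct acceptable $z,z'$, $z'\prec_v z$ iff $C_v(z\vee z')=z$. $x_v$ = restriction of $x$ to $E_v$. A g-matching is $x\in\mathbb Z_+^E$, $x\le b$, each $x_v$ acceptable; $x\prec_F y$ (distinct) iff $x_f\preceq_f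 y_f$ for all $f\in F$. $e\in E_v$ is interesting for $v$ under acceptable $z$ if some $z'\in\mathcal B_v$ has $z'(e)>z(e)$, $z'(e')=z(e')$ for $e'\neq e$, $C_v(z')(e)>z(e)$; $e=wf$ is interesting for $v\in\{w,f\}$ under a g-matching $x$ if so under $x_v$, and blocks $x$ if interesting for both endpoints; stable g-matchings (no blocking edge) form a finite lattice under $\prec_F$ with maximum $x^{\max}$. For stable $x$, $U_F^+(x)$ is the set of edges $wf$ interesting for $f$ under $x$. A legal $f$-pair under $x$ is $(a,c)$ with $a\in U_F^+(x)\cap E_f$, $c\in E_f\setminus\{a\}$ and $C_f(x_f+\mathbf 1^a)=x_f+\mathbf 1^a-\mathbf 1^c$. *)

From mathcomp Require Import all_boot.
Set Implicit Arguments. Unset Strict Implicit. Unset Printing Implicit Defensive.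

Section GMatch.
Variables (W F E : finType) (ew : E -> W) (ef : E -> F).
Variable b : E -> nat.

Definition vec := {ffun E -> nat}.
Definition vertex := (W + F)%type.

Definition incident (v : vertex) (e : E) : bool :=
  match v with inl w => ew e == w | inr f => ef e == f end.

Definition simple_bipartite : Prop :=
  forall e e', ew e = ew e' -> ef e = ef e' -> e = e'.

Definition vle (z z' : vec) : Prop := forall e, z e <= z' e.
Definition vmeet (z z' : vec) : vec := [ffun e => minn (z e) (z' e)].
Definition vjoin (z z' : vec) : vec := [ffun e => maxn (z e) (z' e)].
Definition vadd (z z' : vec) : vec := [ffun e => z e + z' e].
(* truncated subtraction; only used where it is exact *)
Definition vsub (z z' : vec) : vec := [ffun e => z e - z' e].
Definition vnorm (z : vec) : nat := \sum_(e : E) z e.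
Definition unitv (e0 : E) : vec := [ffun e => nat_of_bool (e == e0)].
(* x_v : restriction of x to E_v, viewed as a vector vanishing off E_v *)
Definition restr (v : vertex) (x : vec) : vec :=
  [ffun e => if incident v e then x e else 0].

Definition inB (v : vertex) (z : vec) : Prop :=
  forall e, z e <= b e /\ (~~ incident v e -> z e = 0).

(* choice functions C_v : B_v -> B_v with C_v(z) <= z and (A1)-(A3) *)
Variable C : vertex -> vec -> vec.

Definition choice_axioms : Prop :=
  forall v,
  [/\ (forall z, inB v z -> vle (C v z) z),
      (forall z z', inB v z -> inB v z' ->
         vle z' z -> vle (C v z) z' -> C v z' = C v z),
      (forall z z', inB v z -> inB v z' ->
         vle z' z -> vle (vmeet (C v z) z') (C v z')) &
      (forall z z', inB v z -> inB v z' ->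
         vle z' z -> vnorm (C v z') <= vnorm (C v z))].

Definition acceptable (v : vertex) (z : vec) : Prop := inB v z /\ C v z = z.

Definition prefv (v : vertex) (z' z : vec) : Prop :=
  [/\ acceptable v z, acceptable v z', z <> z' & C v (vjoin z z') = z].
Definition prefeqv (v : vertex) (z' z : vec) : Prop :=
  (acceptable v z /\ z' = z) \/ prefv v z' z.

Definition gmatching (x : vec) : Prop :=
  vle x [ffun e => b e] /\ forall v, acceptable v (restr v x).

Definition precF (x y : vec) : Prop :=
  x <> y /\ forall f : F, prefeqv (inr f) (restr (inr f) x) (restr (inr f) y).

Definition interesting_vec (v : vertex) (z : vec) (e : E) : Prop :=
  incident v e /\
  exists z' : vec, [/\ inB v z', z e < z' e,
     (forall e', e' != e -> z' e' = z e') & z e < C v z' e].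

Definition interesting (v : vertex) (x : vec) (e : E) : Prop :=
  interesting_vec v (restr v x) e.

Definition blocks (x : vec) (e : E) : Prop :=
  interesting (inl (ew e)) x e /\ interesting (inr (ef e)) x e.

Definition stable (x : vec) : Prop := gmatching x /\ forall e, ~ blocks x e.

Definition is_xmax (xmax : vec) : Prop :=
  stable xmax /\ forall y, stable y -> y = xmax \/ precF y xmax.

Definition UFplus (x : vec) (e : E) : Prop := interesting (inr (ef e)) x e.

(* legal f-pair (a,c) under x:  C_f(x_f + 1^a) = x_f + 1^a - 1^c,
   written additively (as an identity in Z^E):
   C_f(x_f + 1^a) + 1^c = x_f + 1^a *)
Definition legal_pair (x : vec) (f : F) (a c : E) : Prop :=
  [/\ UFplus x a, ef a = f, ef c = f, c <> a &
      vadd (C (inr f) (vadd (restr (inr f) x) (unitv a))) (unitv c)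
      = vadd (restr (inr f) x) (unitv a)].

Definition sumunit (k : nat) (I : {set 'I_k}) (a : 'I_k -> E) : vec :=
  [ffun e => \sum_(i in I) nat_of_bool (a i == e)].

End GMatch.

(* Put y := x_f + sum_i 1^{a(i)}.  Since (a(i), c(i)) is legal, C_f rejects c(i) already
   from x_f + 1^{a(i)} <= y, so by (A2) it rejects c(i) from y as well:
   C_f(y) <= y - sum_i 1^{c(i)}.  By (A3), |C_f(y)| >= |C_f(x_f)| = |x_f| = |y| - k, so this
   is an equality, and (A1) shows that removing any of the rejected c(i) from y does not
   change the choice. *)
From mathcomp Require Import all_boot zify.

Lemma vnorm_add (E : finType) (u v : vec E) : vnorm (vadd u v) = vnorm u + vnorm v.
Proof. by rewrite /vnorm -big_split; apply: eq_bigr => e _; rewrite ffunE. Qed.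

Lemma vle_vnorm_eq (E : finType) (u v : vec E) : vle u v -> vnorm v <= vnorm u -> u = v.
Proof.
move=> le_uv le_norm; apply/ffunP => e.
have [le_sum eq_sum] := @leqif_sum E predT _ _ _ (fun e _ => leqif_eq (le_uv e)).
have : vnorm u == vnorm v by rewrite eqn_leq le_norm le_sum.
by rewrite /vnorm eq_sum => /forallP/(_ e)/eqP.
Qed.

Section SumUnit.
Context {E : finType} {k : nat} {g : 'I_k -> E}.

Lemma sumunit_at : injective g -> forall i, sumunit setT g (g i) = 1.
Proof.
move=> inj_g i; rewrite ffunE (bigD1 i) ?in_setT //= eqxx big1 // => j /andP[_ ne_ji].
by rewrite (inj_eq inj_g) (negbTE ne_ji).
Qed.

Lemma sumunit_notin (I : {set 'I_k}) e : (forall i, g i != e) -> sumunit I g e = 0.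
Proof. by move=> g_ne; rewrite ffunE big1 // => i _; rewrite (negbTE (g_ne i)). Qed.

Lemma sumunit_subset (I J : {set 'I_k}) e : I \subset J -> sumunit I g e <= sumunit J g e.
Proof.
move=> /subsetP sIJ; rewrite !ffunE [X in _ <= X]big_mkcond [X in X <= _]big_mkcond /=.
by apply: leq_sum => i _; case: ifP => // /sIJ ->.
Qed.

Lemma vnorm_sumunit : vnorm (sumunit setT g) = k.
Proof.
rewrite /vnorm; under eq_bigr do rewrite ffunE.
rewrite exchange_big /=; under eq_bigr => i _.
  rewrite (bigD1 (g i)) //= eqxx big1 => [|e /negbTE]; last by rewrite eq_sym => ->.
  over.
by rewrite sum_nat_const cardsT card_ord muln1.
Qed.

End SumUnit.

Section ChoiceFunctions.
Context {W F E : finType} {ew : E -> W} {ef : E -> F} {b : E -> nat}.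
Context {C : vertex W F -> vec E -> vec E}.

Lemma inB_le {v z z'} : inB ew ef b v z -> vle z' z -> inB ew ef b v z'.
Proof.
move=> zB le_z'z e; have [le_zb z_off] := zB e; split; first exact: leq_trans le_zb.
by move=> /z_off z0; apply/eqP; rewrite -leqn0 -z0.
Qed.

Lemma interesting_vec_lt_cap v z e : interesting_vec ew ef b C v z e -> z e < b e.
Proof. by move=> [_ [z' [z'B lt_z _ _]]]; exact: leq_trans lt_z (z'B e).1. Qed.

Lemma inB_add_sumunit v z k (g : 'I_k -> E) :
  inB ew ef b v z -> injective g -> (forall i, incident ew ef v (g i)) ->
  (forall i, z (g i) < b (g i)) -> inB ew ef b v (vadd z (sumunit setT g)).
Proof.
move=> zB inj_g g_inc g_cap e; rewrite ffunE; split.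
  have [i /eqP <- | g_ne] := pickP (fun i => g i == e).
    by rewrite sumunit_at // addn1.
  by rewrite sumunit_notin ?addn0 => [|i]; [exact: (zB e).1 | rewrite g_ne].
move=> e_off; rewrite (zB e).2 // add0n sumunit_notin // => i.
by apply: contraNneq e_off => <-.
Qed.

Hypothesis HC : choice_axioms ew ef b C.

Lemma choice_rejects_le {v z} z' {e} :
  inB ew ef b v z -> vle z' z -> C v z' e < z' e -> z' e = z e -> C v z e < z e.
Proof.
move=> zB le_z'z rej z'e; have [_ _ A2 _] := HC v.
have := A2 z z' zB (inB_le zB le_z'z) le_z'z e; rewrite ffunE -z'e; lia.
Qed.

Section LegalPairs.
Context {x : vec E} {f : F} {k : nat} {a c : 'I_k -> E}.
Hypotheses (inj_a : injective a) (inj_c : injective c) (a_neq_c : forall i j, a i <> c j).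
Hypothesis legal : forall i, legal_pair ew ef b C x f (a i) (c i).

Let xf := restr ew ef (inr f) x.
Hypothesis xf_acc : acceptable ew ef b C (inr f) xf.
Let y := vadd xf (sumunit setT a).

Lemma inB_add_legal : inB ew ef b (inr f) y.
Proof.
apply: inB_add_sumunit => [||i|i]; [exact: xf_acc.1 | exact: inj_a | |].
  by have [_ /= -> _ _ _] := legal i.
have [UF ef_a _ _ _] := legal i.
by move: UF; rewrite /UFplus /interesting ef_a => /interesting_vec_lt_cap.
Qed.

Lemma choice_rejects_legal i : C (inr f) y (c i) < y (c i).
Proof.
have [_ _ _ _ legal_eq] := legal i.
have c_ne_a j : (c i == a j) = false by apply/eqP => /esym/a_neq_c.
apply: (choice_rejects_le (vadd xf (unitv (a i))) inB_add_legal).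
- move=> e; rewrite !ffunE leq_add2l; case: eqP => [-> | //].
  by rewrite -[X in X <= _](sumunit_at inj_a i) ffunE.
- move/(congr1 (fun v : vec E => v (c i))): legal_eq; rewrite -/xf !ffunE eqxx c_ne_a; lia.
- rewrite /y ![vadd _ _ _]ffunE [unitv _ _]ffunE c_ne_a sumunit_notin // => j.
  by rewrite eq_sym c_ne_a.
Qed.

Lemma choice_add_legal_le : vle (vadd (C (inr f) y) (sumunit setT c)) y.
Proof.
have [A0 _ _ _] := HC (inr f).
move=> e; rewrite ffunE; have [i /eqP <- | c_ne] := pickP (fun i => c i == e).
  by rewrite sumunit_at // addn1 choice_rejects_legal.
by rewrite sumunit_notin ?addn0 => [|i]; [exact: A0 inB_add_legal e | rewrite c_ne].
Qed.

Lemma vnorm_choice_add_legal : vnorm xf <= vnorm (C (inr f) y).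
Proof.
have [_ _ _ A3] := HC (inr f); have [xfB Cxf] := xf_acc.
rewrite -{1}Cxf; apply: A3 => //; first exact: inB_add_legal.
by move=> e; rewrite /y [vadd _ _ _]ffunE leq_addr.
Qed.

Lemma choice_add_legal : vadd (C (inr f) y) (sumunit setT c) = y.
Proof.
apply: vle_vnorm_eq choice_add_legal_le _.
by rewrite !vnorm_add !vnorm_sumunit leq_add2r vnorm_choice_add_legal.
Qed.

Lemma choice_sub_rejected (I : {set 'I_k}) :
  C (inr f) (vsub y (sumunit I c)) = C (inr f) y.
Proof.
have [_ A1 _ _] := HC (inr f).
have le_sub_y : vle (vsub y (sumunit I c)) y by move=> e; rewrite ffunE leq_subr.
apply: A1 => //; [exact: inB_add_legal | exact: inB_le inB_add_legal le_sub_y |].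
move=> e; rewrite ffunE -[y e](congr1 (fun v : vec E => v e) choice_add_legal) ffunE.
have := @sumunit_subset _ _ c I setT e (subsetT I); lia.
Qed.

End LegalPairs.
End ChoiceFunctions.

Theorem lemma3p6 (W F E : finType) (ew : E -> W) (ef : E -> F) (b : E -> nat)
  (C : vertex W F -> vec E -> vec E)
  (Hsimple : simple_bipartite ew ef)
  (HC : choice_axioms ew ef b C)
  (xmax : vec E) (Hxmax : is_xmax ew ef b C xmax)
  (x : vec E) (Hx : stable ew ef b C x) (Hne : x <> xmax)
  (f : F) (k : nat) (a c : 'I_k -> E)
  (Hinja : injective a) (Hinjc : injective c)
  (Hac : forall i j, a i <> c j)
  (Hlegal : forall i, legal_pair ew ef b C x f (a i) (c i))
  (I : {set 'I_k}) :
  vadd (C (inr f)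
          (vsub (vadd (restr ew ef (inr f) x) (sumunit setT a)) (sumunit I c)))
       (sumunit setT c)
  = vadd (restr ew ef (inr f) x) (sumunit setT a).
Proof.
have [[_ x_acc] _] := Hx.
rewrite (choice_sub_rejected HC Hinja Hinjc Hac Hlegal (x_acc (inr f))).
exact: (choice_add_legal HC Hinja Hinjc Hac Hlegal (x_acc (inr f))).
Qed.
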